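(* Let $n\ge2$ and consider the network in which every pair of the $n$ clients shares exactly one message unique to that pair and there are no other messages (so $m=\binom{n}{2}$ and the hypergraph representation is the complete simple graph $K_n$). Then for every integer $\tau$ with $1\le\tau\le\lfloor n/2\rfloor$, $\mathsf{S}^{(\tau)}_{\mathrm{L}}(\{\mathcal{I}_j\})=\tau(n-2)$.
   Context: Network model: $n$ clients $c_1,\dots,c_n$, finite sets $\mathcal{I}_1,\dots,\mathcal{I}_n$ of message indices; messages $X_i$ i.i.d. uniform on a finite field $\mathbb{F}$ with $|\mathbb{F}|>n$; client $c_j$ holds $\{X_i:i\in\mathcal{I}_j\}$; $\underline{X}$ is the vector of all messages. A protocol: in each of $t$ rounds one client broadcasts to all an element of $\mathbb{F}$ that is a function of its own messages, the round index, and all previous broadcasts; $\mathbf{T}(\underline{X})\in\mathbb{F}^t$ collects the broadcasts. Linear protocol: each broadcast is an $\mathbb{F}$-linear combination of the transmitter's messages. A protocol generates $\tau$ secret keys if there are functions $\mathsf{k}_j$ with $K=\mathsf{k}_1(\{X_i:i\in\mathcal{I}_1\},\mathbf{T}(\underline{X}))$ such that (i) $\mathsf{k}_j(\{X_i:i\in\mathcal{I}_j\},\mathbf{T}(\underline{X}))=K$ a.s. for all $j$; (ii) $K$ is uniform on $\mathbb{F}^\tau$; (iii) $I(K;\mathbf{T}(\underline{X}))=0$. $\mathsf{S}^{(\tau)}_{\mathrm{L}}(\{\mathcal{I}_j\})$ is the minimum number of transmissions of a linear protocol generating $\tau$ secret keys ($\infty$ if none). The hypergraph representation of $\{\mathcal{I}_j\}$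 has vertex set $\{c_1,\dots,c_n\}$ and one hyperedge for each message index $e$, with $c_j\in e$ iff $e\in\mathcal{I}_j$. *)

From HB Require Import structures.
From mathcomp Require Import all_boot all_order all_algebra all_field.
Set Implicit Arguments. Unset Strict Implicit. Unset Printing Implicit Defensive.
Import GRing.Theory.
Local Open Scope ring_scope.

(* General network: n clients ('I_n), finite type M of message indices,
   [holds j e] iff message e belongs to I_j (client j holds X_e).
   A realisation of the messages is X : {ffun M -> F}; the messages are
   i.i.d. uniform, i.e. X is uniform on {ffun M -> F}, so probabilities
   are counts divided by #|{ffun M -> F}|. *)

Definition lin_transmit (F : fieldType) (M : finType) (t : nat)
  (A : 'I_t -> M -> F) (X : {ffun M -> F}) : 'rV[F]_t :=
  \row_(r < t) \sum_(e : M) A r e * X e.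

Definition is_linear_protocol (F : fieldType) (n : nat) (M : finType)
  (holds : 'I_n -> M -> bool) (t : nat) (s : 'I_t -> 'I_n)
  (A : 'I_t -> M -> F) : Prop :=
  forall r e, A r e != 0 -> holds (s r) e.

Definition generates_keys (F : finFieldType) (n : nat) (M : finType)
  (holds : 'I_n -> M -> bool) (t tau : nat)
  (T : {ffun M -> F} -> 'rV[F]_t) : Prop :=
  exists (k : 'I_n -> {ffun M -> F} -> 'rV[F]_t -> 'rV[F]_tau)
         (K : {ffun M -> F} -> 'rV[F]_tau),
    (forall j (X Y : {ffun M -> F}) y,
        (forall e, holds j e -> X e = Y e) -> k j X y = k j Y y) /\
    (* (i) every client recovers the same key K (a.s. = surely, since every
       realisation has positive probability) *)
    (forall j X, k j X (T X) = K X) /\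
    (* (ii) K is uniform on F^tau *)
    (forall kappa : 'rV[F]_tau,
        (#|[set X | K X == kappa]| * #|F| ^ tau = #|{: {ffun M -> F}}|)%N) /\
    (* (iii) I(K; T) = 0, i.e. K and T(X) are independent *)
    (forall (kappa : 'rV[F]_tau) (y : 'rV[F]_t),
        (#|[set X | (K X == kappa) && (T X == y)]| * #|{: {ffun M -> F}}|
         = #|[set X | K X == kappa]| * #|[set X | T X == y]|)%N).

Definition lin_keys_with (F : finFieldType) (n : nat) (M : finType)
  (holds : 'I_n -> M -> bool) (tau t : nat) : Prop :=
  exists (s : 'I_t -> 'I_n) (A : 'I_t -> M -> F),
    is_linear_protocol holds s A /\
    generates_keys holds tau (lin_transmit A).

Definition SL_eq (F : finFieldType) (n : nat) (M : finType)
  (holds : 'I_n -> M -> bool) (tau v : nat) : Prop :=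
  lin_keys_with F holds tau v /\
  (forall t, lin_keys_with F holds tau t -> (v <= t)%N).

(* Complete graph K_n: one message per unordered pair {i,j}, i < j,
   held exactly by c_i and c_j. *)
Definition pair_msg (n : nat) := {p : 'I_n * 'I_n | (p.1 < p.2)%N}.

Definition Kn_holds (n : nat) (j : 'I_n) (e : pair_msg n) : bool :=
  ((val e).1 == j) || ((val e).2 == j).

(* Write the protocol as the t x m matrix [A] of its broadcasts
   and let [V_j] be the coordinate space of the messages client [j] holds.
   Moving the messages along a vector orthogonal to [A + V_j] changes neither
   the broadcasts nor client [j]'s view, hence not the key; so the key is
   constant on the cosets of the sum [S] of these spaces inside [ker A], and
   [tau <= dim ker A - dim S <= dim D - rank A] for [D] the intersection of
   the [A + V_j]. Every message is held by exactly two clients, so with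
   distinct scalars [l_j] the copies [(D :&: V_j) * (1 | l_j)] are independent
   subspaces of [D * (1 | 0) + D * (0 | 1)]: [sum_j dim (D :&: V_j) <= 2 dim D].
   Since [dim (D :&: V_j) = dim D - rank A + dim (A :&: V_j)] and every row of
   [A] lies in the [V_j] of its sender, this gives
   [(n - 2) (dim D - rank A) <= rank A <= t]. Pair client [2i] with [2i+1] for [i < tau]; key [i] is the
   message they share, broadcast [n - 2] times, each time masked by a message
   that one of them shares with one of the other clients, no mask being used
   twice. Keys and broadcasts then form a surjective linear map of the
   messages, which makes the key uniform and independent of the broadcasts. *)

From mathcomp Require Import all_boot all_order all_algebra all_field.
From mathcomp Require Import zify.
Set Implicit Arguments. Unset Strict Implicit. Unset Printing Implicit Defensive.
Import GRing.Theory.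
Local Open Scope ring_scope.

(** * Lower bound *)

Definition held_by_two (n : nat) (M : Type) (holds : 'I_n -> M -> bool) :=
  forall e, exists u v, u != v /\ forall j, holds j e = (j == u) || (j == v).

Section PerpComplement.
Variables (F : fieldType) (m : nat).

Definition perpmx k (X : 'M[F]_(k, m)) : 'M[F]_m := kermx X^T.

Lemma sub_perpmxP p k (Y : 'M[F]_(p, m)) (X : 'M[F]_(k, m)) :
  reflect (Y *m X^T = 0) (Y <= perpmx X)%MS.
Proof. exact: sub_kermxP. Qed.

Lemma perpmxC p k (Y : 'M[F]_(p, m)) (X : 'M[F]_(k, m)) :
  (Y <= perpmx X)%MS = (X <= perpmx Y)%MS.
Proof.
by apply/sub_perpmxP/sub_perpmxP => h; rewrite -[LHS]trmxK trmx_mul trmxK h trmx0.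
Qed.

Lemma sub_perpmx_adds p k1 k2 (Y : 'M[F]_(p, m)) (X1 : 'M[F]_(k1, m))
    (X2 : 'M[F]_(k2, m)) :
  (Y <= perpmx (X1 + X2)%MS)%MS = (Y <= perpmx X1)%MS && (Y <= perpmx X2)%MS.
Proof. by rewrite !(perpmxC Y) addsmx_sub. Qed.

Lemma perpmxS k1 k2 (X1 : 'M[F]_(k1, m)) (X2 : 'M[F]_(k2, m)) :
  (X1 <= X2)%MS -> (perpmx X2 <= perpmx X1)%MS.
Proof.
move=> /submxP [c ->]; apply/sub_perpmxP.
by rewrite trmx_mul mulmxA (sub_kermxP (submx_refl _)) mul0mx.
Qed.

Lemma mxrank_perpmx k (X : 'M[F]_(k, m)) : \rank (perpmx X) = (m - \rank X)%N.
Proof. by rewrite mxrank_ker mxrank_tr. Qed.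

Lemma perpmxK k (X : 'M[F]_(k, m)) : (perpmx (perpmx X) :=: X)%MS.
Proof.
have sX : (X <= perpmx (perpmx X))%MS.
  apply/sub_perpmxP; rewrite -[X]trmxK -trmx_mul trmxK.
  by rewrite (sub_kermxP (submx_refl _)) trmx0.
apply/eqmxP; rewrite sX andbT; have [_ <-] := mxrank_leqif_sup sX.
by rewrite !mxrank_perpmx subKn ?rank_leq_col.
Qed.

End PerpComplement.

Section HeldSpaces.
Variables (F : fieldType) (n m : nat) (holds : 'I_n -> 'I_m -> bool).

Definition heldmx j : 'M[F]_m := diag_mx (\row_c (holds j c)%:R).

Lemma sub_heldmxP k (x : 'M[F]_(k, m)) j :
  reflect (forall a c, ~~ holds j c -> x a c = 0) (x <= heldmx j)%MS.
Proof.
apply: (iffP idP) => [/submxP [u ->] a c hc | x0].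
  by rewrite mul_mx_diag !mxE (negbTE hc) mulr0.
apply/submxP; exists x; apply/matrixP => a c; rewrite mul_mx_diag !mxE.
by case: (boolP (holds j c)) => h; rewrite ?mulr1 // mulr0 x0.
Qed.

Lemma perpmx_heldmx_eq0 k (y : 'M[F]_(k, m)) j a c :
  (y <= perpmx (heldmx j))%MS -> holds j c -> y a c = 0.
Proof.
move=> /sub_perpmxP /matrixP /(_ a c) + hc.
by rewrite tr_diag_mx mul_mx_diag !mxE hc mulr1.
Qed.

Hypothesis two : held_by_two holds.

Lemma other_holder i c : holds i c ->
  exists k, [/\ k != i, holds k c & forall j, j != i -> j != k -> ~~ holds j c].
Proof.
have [u [v [uv hc]]] := two c; rewrite hc => /orP[]/eqP ->.
  exists v; rewrite eq_sym uv hc eqxx orbT.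
  by split=> // j h1 h2; rewrite hc negb_or h1 h2.
exists u; rewrite uv hc eqxx.
by split=> // j h1 h2; rewrite hc negb_or h1 h2.
Qed.

Variable lam : 'I_n -> F.
Hypothesis lam_inj : injective lam.

Definition liftmx j : 'M[F]_(m, m + m) := row_mx 1%:M (lam j)%:M.

Lemma liftmx_free j : row_free (liftmx j).
Proof.
rewrite /row_free eqn_leq rank_leq_row -{1}(mxrank1 F m).
have -> : (1%:M : 'M[F]_m) = liftmx j *m col_mx 1%:M 0.
  by rewrite mul_row_col mul1mx mulmx0 addr0.
exact: mxrankM_maxl.
Qed.

Lemma sub_mul_liftmx (P : 'M[F]_m) j (y : 'rV[F]_(m + m)) :
  (y <= P *m liftmx j)%MS -> (lsubmx y <= P)%MS /\ rsubmx y = lam j *: lsubmx y.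
Proof.
move=> /submxP [u ->]; rewrite mulmxA mul_mx_row row_mxKl row_mxKr mulmx1.
by rewrite mul_mx_scalar submxMl.
Qed.

Section Lift.
Variable D : 'M[F]_m.

Let E j := <<(D :&: heldmx j)%MS *m liftmx j>>%MS.

Lemma sub_lift_heldmx j (y : 'rV[F]_(m + m)) :
  (y <= E j)%MS -> (lsubmx y <= heldmx j)%MS /\ rsubmx y = lam j *: lsubmx y.
Proof.
by rewrite genmxE => /sub_mul_liftmx [/submx_trans-> //]; apply: capmxSr.
Qed.

Lemma sum_lift_col (P : pred 'I_n) (w : 'I_n -> 'rV[F]_(m + m)) k c :
  (forall j, (w j <= E j)%MS) -> P k ->
  (forall j, P j -> j != k -> ~~ holds j c) ->
  lsubmx (\sum_(j | P j) w j) 0 c = lsubmx (w k) 0 c /\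
  rsubmx (\sum_(j | P j) w j) 0 c = lam k * lsubmx (w k) 0 c.
Proof.
move=> wE Pk only_k.
have w0 j : P j && (j != k) -> lsubmx (w j) 0 c = 0.
  case/andP=> Pj jk; have [/sub_heldmxP -> //] := sub_lift_heldmx (wE j).
  exact: only_k.
have wr j : rsubmx (w j) 0 c = lam j * lsubmx (w j) 0 c.
  by have [_ ->] := sub_lift_heldmx (wE j); rewrite mxE.
split; rewrite linear_sum summxE (bigD1 k) //= ?wr big1 ?addr0 //.
by move=> j jk; rewrite wr w0 ?mulr0.
Qed.

Lemma mxdirect_lift : mxdirect (\sum_j E j).
Proof.
apply/mxdirect_sumsP => i _; apply/eqP; rewrite -submx0; apply/row_subP => a.
set z := row a _.
have /sub_lift_heldmx [zV zlam] : (z <= E i)%MS.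
  by apply: submx_trans (row_sub _ _) (capmxSl _ _).
have /sub_sumsmxP [u zE] : (z <= \sum_(j | true && (j != i)) E j)%MS.
  by apply: submx_trans (row_sub _ _) (capmxSr _ _).
suff l0 : lsubmx z = 0 by rewrite -(hsubmxK z) zlam l0 scaler0 row_mx0 sub0mx.
apply/rowP => c; rewrite [RHS]mxE.
have [hic | /(sub_heldmxP _ _ zV) -> //] := boolP (holds i c).
(* [c] is held by [i] and by exactly one other client [k]: the two halves of [z]
   then force [(lam i - lam k) * z_c = 0]. *)
have [k [ki _ only]] := other_holder hic.
have [lz rz] : lsubmx z 0 c = lsubmx (u k *m E k) 0 c /\
    rsubmx z 0 c = lam k * lsubmx (u k *m E k) 0 c.
  rewrite zE; apply: sum_lift_col => [j | // | j /andP[_ ji] jk].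
    exact: submxMl.
  exact: only.
move: rz; rewrite zlam mxE -lz => /eqP; rewrite -subr_eq0 -mulrBl mulf_eq0.
by rewrite subr_eq0 (inj_eq lam_inj) eq_sym (negbTE ki) => /eqP.
Qed.

Lemma sum_mxrank_cap_heldmx : (\sum_j \rank (D :&: heldmx j) <= 2 * \rank D)%N.
Proof.
have rE j : \rank (E j) = \rank (D :&: heldmx j)%MS.
  by rewrite genmxE mxrankMfree ?liftmx_free.
have sub2 : ((\sum_j E j)%MS <= D *m row_mx 1%:M 0 + D *m row_mx 0 1%:M)%MS.
  apply/sumsmx_subP => j _; rewrite genmxE.
  have -> : (D :&: heldmx j)%MS *m liftmx j = (D :&: heldmx j)%MS *m row_mx 1%:M 0
     + (lam j *: (D :&: heldmx j)%MS) *m row_mx 0 1%:M.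
    rewrite !mul_mx_row !mulmx1 !mulmx0 add_row_mx addr0 add0r.
    by rewrite mul_mx_scalar.
  by apply: addmx_sub_adds; apply: submxMr; rewrite ?scalemx_sub ?capmxSl.
have := mxrankS sub2; rewrite (mxdirectP mxdirect_lift) /=.
under eq_bigr do rewrite rE.
move/leq_trans; apply; apply: leq_trans (mxrank_adds_leqif _ _) _.
by rewrite mul2n -addnn leq_add // mxrankM_maxl.
Qed.

End Lift.
End HeldSpaces.

Section Spans.
Variables (F : fieldType) (n m t : nat) (holds : 'I_n -> 'I_m -> bool).
Variables (s : 'I_t -> 'I_n) (A : 'M[F]_(t, m)).
Local Notation heldmx := (heldmx F holds).

Definition shared_span := (\bigcap_j (A + heldmx j)%MS)%MS.
Definition blind_span := (\sum_j perpmx (A + heldmx j)%MS)%MS.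

Lemma sub_shared_span : (A <= shared_span)%MS.
Proof. by apply/sub_bigcapmxP => j _; apply: addsmxSl. Qed.

Lemma blind_span_sub : (blind_span <= perpmx A)%MS.
Proof. by apply/sumsmx_subP => j _; apply/perpmxS/addsmxSl. Qed.

Lemma perpmx_blind_span : (perpmx blind_span <= shared_span)%MS.
Proof.
apply/sub_bigcapmxP => j _; rewrite -(perpmxK (A + heldmx j)%MS).
by apply/perpmxS/(sumsmx_sup j).
Qed.

Lemma blind_span_gap :
  (\rank (perpmx A) - \rank blind_span <= \rank shared_span - \rank A)%N.
Proof.
have := mxrankS perpmx_blind_span; rewrite !mxrank_perpmx.
by have := rank_leq_col blind_span; have := rank_leq_col A; lia.
Qed.

Lemma mxrank_cap_shared_span j : \rank (shared_span :&: heldmx j) =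
  (\rank shared_span - \rank A + \rank (A :&: heldmx j))%N.
Proof.
have sAD := mxrankS sub_shared_span.
have sAV := mxrankS (capmxSr A (heldmx j)).
have eqDA : \rank (shared_span + heldmx j) = \rank (A + heldmx j).
  apply/eqmx_rank/andP; split; last exact/addsmxS/submx_refl/sub_shared_span.
  by rewrite addsmx_sub addsmxSr andbT (bigcapmx_inf j).
have := mxrank_sum_cap shared_span (heldmx j); have := mxrank_sum_cap A (heldmx j).
by rewrite eqDA; lia.
Qed.

Hypothesis sender_holds : forall r c, A r c != 0 -> holds (s r) c.

Lemma mxrank_le_sum_cap_heldmx : (\rank A <= \sum_j \rank (A :&: heldmx j))%N.
Proof.
apply: leq_trans (mxrank_sum_leqif _).1; apply/mxrankS/row_subP => r.
rewrite (sumsmx_sup (s r)) // sub_capmx row_sub /=.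
apply/sub_heldmxP => a c; rewrite mxE; apply: contraNeq; exact: sender_holds.
Qed.

Hypothesis two : held_by_two holds.
Variable lam : 'I_n -> F.
Hypothesis lam_inj : injective lam.

Lemma shared_span_gap :
  ((n - 2) * (\rank shared_span - \rank A) <= \rank A)%N.
Proof.
have := sum_mxrank_cap_heldmx two lam_inj shared_span.
under eq_bigr do rewrite mxrank_cap_shared_span.
rewrite big_split /= sum_nat_const card_ord.
have := mxrank_le_sum_cap_heldmx; have := mxrankS sub_shared_span.
set d := (\rank shared_span - _)%N; set a := \sum_j _.
rewrite mulnBl; nia.
Qed.

End Spans.

(* A map onto [F^tau] from the subspace [U] that is invariant under [S] factors
   injectively through [U / S]; counting the two sides bounds [tau]. *)
Lemma card_keys_le (F : finFieldType) m tau (U S : 'M[F]_m)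
    (key : 'rV[F]_m -> 'rV[F]_tau) :
  (S <= U)%MS ->
  (forall x z, (x <= U)%MS -> (z <= S)%MS -> key (x + z) = key x) ->
  (forall k, exists2 x, (x <= U)%MS & key x = k) ->
  (tau <= \rank U - \rank S)%N.
Proof.
move=> sSU key_inv key_onto; pose Q := U *m cokermx S.
have rQ : (\rank Q <= \rank U - \rank S)%N.
  have := mxrank_mul_ker U (cokermx S).
  have : (S <= U :&: kermx (cokermx S))%MS.
    by rewrite sub_capmx sSU; apply/sub_kermxP/mulmx_coker.
  by move/mxrankS; rewrite -/Q; lia.
pose x k := odflt 0 [pick x : 'rV[F]_m | (x <= U)%MS && (key x == k)].
have xP k : (x k <= U)%MS /\ key (x k) = k.
  rewrite /x; case: pickP => [y /andP[-> /eqP ->] // | none].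
  by have [y yU yk] := key_onto k; move: (none y); rewrite yU yk eqxx.
have xQ k : (x k *m cokermx S <= row_base Q)%MS.
  by rewrite eq_row_base submxMr ?(xP k).1.
pose g k : 'rV[F]_(\rank Q) := x k *m cokermx S *m pinvmx (row_base Q).
have g_inj : injective g.
  move=> k1 k2 /(congr1 (mulmx^~ (row_base Q))).
  rewrite !mulmxKpV // => /eqP; rewrite -subr_eq0 -mulmxBl -submxE => xS.
  by have := key_inv _ _ (xP k2).1 xS; rewrite addrC subrK (xP k1).2 (xP k2).2.
have := leq_card g g_inj; rewrite !card_mx !mul1n leq_exp2l ?finNzRing_gt1 //.
by move/leq_trans; apply.
Qed.

Section LinearKeyBound.
Variables (F : finFieldType) (n m t tau : nat) (holds : 'I_n -> 'I_m -> bool).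
Variables (s : 'I_t -> 'I_n) (A : 'M[F]_(t, m)) (key : 'rV[F]_m -> 'rV[F]_tau).
Local Notation heldmx := (heldmx F holds).

Hypothesis key_local : forall j (x y : 'rV[F]_m), (x <= perpmx A)%MS ->
  (y <= perpmx (A + heldmx j)%MS)%MS -> key (x + y) = key x.

Lemma key_blind_invariant x z : (x <= perpmx A)%MS ->
  (z <= blind_span holds A)%MS -> key (x + z) = key x.
Proof.
move=> + /sub_sumsmxP [u ->]; elim/big_rec: _ x => [x _ | j y _ IH x xA].
  by rewrite addr0.
set P := perpmx (A + heldmx j)%MS.
have yj : (u j *m P <= P)%MS by apply: submxMl.
have yA : (u j *m P <= perpmx A)%MS by apply: submx_trans yj _; apply/perpmxS/addsmxSl.
by rewrite addrA IH ?addmx_sub // (key_local xA yj).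
Qed.

Hypothesis key_onto : forall k, exists2 x, (x <= perpmx A)%MS & key x = k.
Hypothesis sender_holds : forall r c, A r c != 0 -> holds (s r) c.
Hypothesis two : held_by_two holds.
Variable lam : 'I_n -> F.
Hypothesis lam_inj : injective lam.

Lemma linear_key_bound : ((n - 2) * tau <= t)%N.
Proof.
have keys := card_keys_le (blind_span_sub holds A) key_blind_invariant key_onto.
have gap := leq_trans keys (blind_span_gap holds A).
apply: leq_trans (rank_leq_row A).
apply: leq_trans (shared_span_gap sender_holds two lam_inj).
by rewrite leq_mul2l gap orbT.
Qed.

End LinearKeyBound.

Lemma card_set_fibers (T U : finType) (P : pred T) (f : T -> U) :
  #|[set x | P x]| = (\sum_(y : U) #|[set x | P x && (f x == y)]|)%N.
Proof.
rewrite -sum1dep_card (partition_big f xpredT) //=.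
by apply: eq_bigr => y _; rewrite sum1dep_card.
Qed.

Lemma morphB (V W : zmodType) (f : V -> W) : {morph f : x y / x + y} ->
  {morph f : x y / x - y}.
Proof. by move=> fD x y; apply/eqP; rewrite eq_sym subr_eq -fD subrK. Qed.

Section AdditiveKeys.
Variables (M : finType) (F : finFieldType) (a b : nat).
Variables (K : {ffun M -> F} -> 'rV[F]_a) (T : {ffun M -> F} -> 'rV[F]_b).
Hypotheses (KD : {morph K : X Y / X + Y}) (TD : {morph T : X Y / X + Y}).
Hypothesis KT_onto : forall k y, exists X, K X = k /\ T X = y.

Let fiber k y := [set X | (K X == k) && (T X == y)].

Lemma card_fiber k y : #|fiber k y| = #|fiber 0 0|.
Proof.
have [X0 [KX0 TX0]] := KT_onto k y.
have -> : fiber k y = [set (X : {ffun M -> F}) + X0 | X in fiber 0 0].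
  apply/setP => X; rewrite inE; apply/andP/imsetP => [[/eqP kX /eqP yX] | [Z]].
    exists (X - X0); last by rewrite subrK.
    by rewrite inE !morphB // kX yX KX0 TX0 !subrr !eqxx.
  rewrite inE => /andP[/eqP KZ /eqP TZ] ->.
  by rewrite KD TD KZ TZ KX0 TX0 !add0r.
by rewrite card_imset //; apply: addIr.
Qed.

Lemma card_key_fiber k : #|[set X | K X == k]| = (#|fiber 0%R 0%R| * #|F| ^ b)%N.
Proof.
rewrite (card_set_fibers _ T); under eq_bigr do rewrite (card_fiber k).
by rewrite sum_nat_const card_mx mul1n mulnC.
Qed.

Lemma card_bcast_fiber y : #|[set X | T X == y]| = (#|fiber 0%R 0%R| * #|F| ^ a)%N.
Proof.
rewrite (card_set_fibers _ K); under eq_bigr => k _.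
  rewrite (_ : [set X | _ && _] = fiber k y) ?card_fiber; last first.
    by apply/setP => X; rewrite !inE andbC.
  over.
by rewrite sum_nat_const card_mx mul1n mulnC.
Qed.

Lemma card_messages :
  #|{: {ffun M -> F}}| = (#|fiber 0%R 0%R| * #|F| ^ b * #|F| ^ a)%N.
Proof.
rewrite -cardsT (card_set_fibers _ K) /=; under eq_bigr do rewrite card_key_fiber.
by rewrite sum_nat_const card_mx mul1n mulnC.
Qed.

Lemma key_uniform k : (#|[set X | K X == k]| * #|F| ^ a = #|{: {ffun M -> F}}|)%N.
Proof. by rewrite card_key_fiber card_messages. Qed.

Lemma key_bcast_indep k y :
  (#|[set X | (K X == k) && (T X == y)]| * #|{: {ffun M -> F}}|
   = #|[set X | K X == k]| * #|[set X | T X == y]|)%N.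
Proof.
rewrite -/(fiber k y) card_fiber card_messages card_key_fiber card_bcast_fiber.
nia.
Qed.

End AdditiveKeys.

Lemma indep_fiber_nonempty (T U V : finType) (f : T -> U) (g : T -> V) u v :
  (0 < #|[set x | f x == u]|)%N -> (0 < #|[set x | g x == v]|)%N ->
  (#|[set x | (f x == u) && (g x == v)]| * #|T|
   = #|[set x | f x == u]| * #|[set x | g x == v]|)%N ->
  exists x, f x = u /\ g x = v.
Proof.
move=> fu gv indep.
have : (0 < #|[set x | (f x == u) && (g x == v)]| * #|T|)%N.
  by rewrite indep muln_gt0 fu gv.
rewrite muln_gt0 => /andP[/card_gt0P [x] + _].
by rewrite inE => /andP[/eqP fx /eqP gx]; exists x.
Qed.

Section MessageVectors.
Variables (F : fieldType) (M : finType).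

Definition vec_ffun (X : {ffun M -> F}) : 'rV[F]_#|M| := \row_i X (enum_val i).
Definition ffun_vec (x : 'rV[F]_#|M|) : {ffun M -> F} := [ffun e => x 0 (enum_rank e)].

Lemma ffun_vecK : cancel ffun_vec vec_ffun.
Proof. by move=> x; apply/rowP => i; rewrite !mxE ffunE enum_valK. Qed.

Lemma vec_ffunK : cancel vec_ffun ffun_vec.
Proof. by move=> X; apply/ffunP => e; rewrite ffunE mxE enum_rankK. Qed.

Lemma ffun_vecD : {morph ffun_vec : x y / x + y}.
Proof. by move=> x y; apply/ffunP => e; rewrite !ffunE mxE. Qed.

Definition coefmx t (A : 'I_t -> M -> F) : 'M[F]_(t, #|M|) :=
  \matrix_(r, i) A r (enum_val i).

Lemma lin_transmitE t (A : 'I_t -> M -> F) X :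
  lin_transmit A X = vec_ffun X *m (coefmx A)^T.
Proof.
apply/rowP => r; rewrite !mxE (reindex (@enum_val M (mem predT))) /=.
  by apply: eq_bigr => i _; rewrite !mxE mulrC.
by exists enum_rank => e _; rewrite ?enum_valK ?enum_rankK.
Qed.

Lemma lin_transmitD t (A : 'I_t -> M -> F) :
  {morph lin_transmit A : X Y / X + Y}.
Proof.
move=> X Y; apply/rowP => r; rewrite !mxE -big_split /=.
by apply: eq_bigr => e _; rewrite ffunE mulrDr.
Qed.

End MessageVectors.

Lemma held_by_two_enum n (M : finType) (holds : 'I_n -> M -> bool) :
  held_by_two holds -> held_by_two (fun j (c : 'I_#|M|) => holds j (enum_val c)).
Proof. by move=> two c; apply: two. Qed.

(* A field with [n] elements provides the distinct scalars of [linear_key_bound]. *)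
Theorem lin_keys_lower_bound (F : finFieldType) n (M : finType)
    (holds : 'I_n -> M -> bool) tau t :
  held_by_two holds -> (n <= #|F|)%N -> lin_keys_with F holds tau t ->
  ((n - 2) * tau <= t)%N.
Proof.
move=> two nF [s [A [A_supp [k [K [k_local [k_agree [K_unif K_indep]]]]]]]].
pose key x := K (ffun_vec x).
have lam_inj : injective (fun j : 'I_n => @enum_val F (mem predT) (widen_ord nF j)).
  by move=> i j /enum_val_inj [] /val_inj.
apply: (linear_key_bound (key := key) _ _ _ (held_by_two_enum two) lam_inj).
- move=> j x y xA; rewrite sub_perpmx_adds => /andP[yA yV].
  rewrite /key -(k_agree j) -(k_agree j (ffun_vec x)) !lin_transmitE !ffun_vecK.
  rewrite mulmxDl (sub_perpmxP _ _ yA) addr0; apply: k_local => e je.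
  rewrite ffun_vecD ffunE [ffun_vec y e]ffunE.
  by rewrite (perpmx_heldmx_eq0 _ yV) ?addr0 ?enum_rankK.
- move=> kap; have key_pos : (0 < #|[set X | K X == kap]|)%N.
    have : (0 < #|{: {ffun M -> F}}|)%N by apply/card_gt0P; exists [ffun => 0].
    by rewrite -(K_unif kap) muln_gt0 => /andP[].
  have silent_pos : (0 < #|[set X | lin_transmit A X == 0%R]|)%N.
    apply/card_gt0P; exists 0; rewrite inE lin_transmitE.
    rewrite (_ : vec_ffun 0 = 0) ?mul0mx //.
    by apply/rowP => i; rewrite !mxE ffunE.
  have [X [KX TX]] := indep_fiber_nonempty key_pos silent_pos (K_indep kap 0).
  exists (vec_ffun X); last by rewrite /key vec_ffunK.
  by apply/sub_perpmxP; rewrite -TX lin_transmitE.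
- by move=> r c; rewrite mxE; apply: A_supp.
Qed.

Local Close Scope ring_scope.

(** * Achievability *)

(* Client [2i] and [2i+1] form the [i]-th pair; [other_client i q] is the
   [q]-th client outside it and [other_rank i] inverts it. *)
Definition other_client (i q : nat) := if q < 2 * i then q else q + 2.
Definition other_rank (i j : nat) := if j < 2 * i then j else j - 2.
Definition in_pair (i j : nat) := (j == 2 * i) || (j == (2 * i).+1).

(* The member of pair [i] sharing the mask with client [k]: for two pairs
   [i < i'], pair [i] uses the crossing edges {2i, 2i'+1}, {2i+1, 2i'} and
   pair [i'] the parallel ones, so no message masks two keys. *)
Definition pair_partner (i k : nat) :=
  2 * i + (if i < k %/ 2 then 1 - k %% 2 else k %% 2).

Lemma pair_partner_in_pair i k : in_pair i (pair_partner i k).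
Proof. by rewrite /in_pair /pair_partner; case: ifP => _; apply/orP; lia. Qed.

Lemma other_client_notin_pair i q : ~~ in_pair i (other_client i q).
Proof.
by rewrite /in_pair /other_client; case: ifP => h; apply/norP; split; apply/eqP; lia.
Qed.

Lemma mask_ends_inj i i' q q' :
  let k := other_client i q in let k' := other_client i' q' in
  (pair_partner i k = pair_partner i' k' /\ k = k') \/
  (pair_partner i k = k' /\ k = pair_partner i' k') -> i = i' /\ q = q'.
Proof.
rewrite /= /pair_partner /other_client.
by case: ifP; case: ifP => h1 h2; case: ifP; case: ifP => h3 h4; lia.
Qed.

Lemma pair_ends_neq_mask i i' q :
  let k := other_client i' q in
  ~ ((2 * i = pair_partner i' k /\ (2 * i).+1 = k) \/
     (2 * i = k /\ (2 * i).+1 = pair_partner i' k)).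
Proof.
by rewrite /= /pair_partner /other_client; case: ifP; case: ifP => h1 h2; lia.
Qed.

Lemma Kn_held_by_two n : held_by_two (@Kn_holds n).
Proof.
move=> e; exists (val e).1, (val e).2; split; first by rewrite neq_ltn (valP e).
by move=> j; rewrite /Kn_holds ![_ == j]eq_sym.
Qed.

Section Edges.
Variables (n : nat) (n_gt1 : 1 < n).
Local Notation PM := (pair_msg n).

Definition client (x : nat) : 'I_n := insubd (Ordinal (ltnW n_gt1)) x.

Lemma val_client x : x < n -> val (client x) = x.
Proof. by move=> h; rewrite /client val_insubd h. Qed.

Fact edge0_subproof : ((client 0, client 1).1 < (client 0, client 1).2)%N.
Proof. by rewrite /= !val_client // ltnW. Qed.

(* [edge u v] is meaningful only for distinct [u, v < n]. *)
Definition edge (u v : nat) : PM :=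
  insubd (exist _ (client 0, client 1) edge0_subproof : PM)
    (client (minn u v), client (maxn u v)).

Lemma Kn_holds_edge (j : 'I_n) u v : u < n -> v < n -> u != v ->
  Kn_holds j (edge u v) = (j == u :> nat) || (j == v :> nat).
Proof.
move=> un vn uv; rewrite /Kn_holds /edge val_insubd /=.
have minn_lt : minn u v < n by rewrite gtn_min un.
have maxn_lt : maxn u v < n by rewrite gtn_max un vn.
rewrite ifT /= ?val_client //; last by move: uv; clear; lia.
rewrite -!(inj_eq val_inj) /= !val_client //.
by case: (leqP u v) => _; rewrite ![_ == val j]eq_sym // orbC.
Qed.

Lemma edge_inj u v u' v' : u < n -> v < n -> u' < n -> v' < n ->
  u != v -> u' != v' -> edge u v = edge u' v' ->
  (u = u' /\ v = v') \/ (u = v' /\ v = u').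
Proof.
move=> un vn un' vn' uv uv' e.
have ends (j : 'I_n) :
    (j == u :> nat) || (j == v :> nat) = (j == u' :> nat) || (j == v' :> nat).
  by rewrite -!Kn_holds_edge // e.
have := ends (client u); have := ends (client v); have := ends (client u').
by rewrite !val_client // !eqxx /= ?orbT /=; move: uv uv'; clear; lia.
Qed.

End Edges.

Section IndicatorSums.
Variables (F : pzRingType) (M : finType).
Local Open Scope ring_scope.

Definition delta_ffun (c : F) (a : M) : {ffun M -> F} :=
  [ffun e => c * (e == a)%:R].

Lemma sum_indicator_mul (a : M) (X : {ffun M -> F}) :
  \sum_e (e == a)%:R * X e = X a.
Proof.
rewrite (bigD1 a) //= eqxx mul1r big1 ?addr0 // => e /negbTE ->.
by rewrite mul0r.
Qed.

Lemma sum_delta_ffun_out (I : finType) (c : I -> F) (f : I -> M) e :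
  (forall i, f i != e) -> (\sum_i delta_ffun (c i) (f i)) e = 0.
Proof.
move=> fe; rewrite sum_ffunE big1 // => i _.
by rewrite ffunE eq_sym (negbTE (fe i)) mulr0.
Qed.

Lemma sum_delta_ffun_in (I : finType) (c : I -> F) (f : I -> M) i :
  injective f -> (\sum_i delta_ffun (c i) (f i)) (f i) = c i.
Proof.
move=> f_inj; rewrite sum_ffunE (bigD1 i) //= big1 ?addr0.
  by rewrite ffunE eqxx mulr1.
by move=> i' i'i; rewrite ffunE (inj_eq f_inj) eq_sym (negbTE i'i) mulr0.
Qed.

End IndicatorSums.

Section Construction.
Variables (F : finFieldType) (n tau : nat).
Hypotheses (n_gt1 : 1 < n) (tau_gt0 : 0 < tau) (tau_half : tau <= n./2).
Local Notation PM := (pair_msg n).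
Local Notation N := (n - 2)%N.
Local Notation t := (tau * (n - 2))%N.
Local Open Scope ring_scope.
Local Notation edge := (edge n_gt1).

(* Round [r = i * N + q] masks the [i]-th key for the [q]-th client outside
   pair [i]. *)
Definition key_msg (i : 'I_tau) : PM := edge (2 * i)%N (2 * i).+1.
Definition round_key (r : 'I_t) : 'I_tau := insubd (Ordinal tau_gt0) (r %/ N)%N.
Definition round_client (r : 'I_t) := other_client (round_key r) (r %% N)%N.
Definition round_partner (r : 'I_t) := pair_partner (round_key r) (round_client r).
Definition mask_msg (r : 'I_t) := edge (round_partner r) (round_client r).
Definition sender (r : 'I_t) : 'I_n := client n_gt1 (round_partner r).
Definition coef (r : 'I_t) (e : PM) : F :=
  (e == key_msg (round_key r))%:R + (e == mask_msg r)%:R.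
Definition key (X : {ffun PM -> F}) : 'rV[F]_tau := \row_i X (key_msg i).
Definition bcast_at (y : 'rV[F]_t) (r : nat) : F :=
  \sum_(r' < t | r' == r :> nat) y 0 r'.
Definition decode (j : 'I_n) (X : {ffun PM -> F}) (y : 'rV[F]_t) : 'rV[F]_tau :=
  \row_i if in_pair i j then X (key_msg i)
         else bcast_at y (i * N + other_rank i j)%N - X (edge (pair_partner i j) j).

Lemma pair_lt (i : 'I_tau) : ((2 * i).+1 < n)%N.
Proof. by have := ltn_ord i; move: tau_half; clear; lia. Qed.

Lemma others_gt0 (r : 'I_t) : (0 < N)%N.
Proof.
have := ltn_ord r; move: (val r) => x.
by rewrite lt0n; apply: contraTneq => ->; rewrite muln0.
Qed.

Lemma round_keyE r : val (round_key r) = (r %/ N)%N.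
Proof. by rewrite /round_key val_insubd ltn_divLR ?(others_gt0 r) // ltn_ord. Qed.

Lemma round_facts r :
  [/\ (round_client r < n)%N, (round_partner r < n)%N,
      in_pair (round_key r) (round_partner r)
    & ~~ in_pair (round_key r) (round_client r)].
Proof.
have q_lt : (r %% N < N)%N by rewrite ltn_pmod ?others_gt0.
have := pair_lt (round_key r).
have := pair_partner_in_pair (round_key r) (round_client r).
rewrite /round_partner /round_client other_client_notin_pair /in_pair /other_client.
by case: ifP => _; case/orP => /eqP ->; split; lia.
Qed.

Lemma round_edge_facts r :
  [/\ (round_client r < n)%N, (round_partner r < n)%N
    & round_partner r != round_client r].
Proof.
have [kn pn p_in k_out] := round_facts r; split=> //.
by apply: contraNneq k_out => <-.
Qed.

Lemma key_msg_inj : injective key_msg.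
Proof.
move=> i i' /edge_inj e; apply: val_inj.
have h := pair_lt i; have h' := pair_lt i'.
by have [] := e (ltnW h) h (ltnW h') h'; rewrite ?neq_ltn ?ltnSn //= => ?; lia.
Qed.

Lemma mask_msg_inj : injective mask_msg.
Proof.
move=> r r' /edge_inj e.
have [kn pn pk] := round_edge_facts r; have [kn' pn' pk'] := round_edge_facts r'.
have [ri rq] := mask_ends_inj (e pn kn pn' kn' pk pk').
apply: val_inj; rewrite /= (divn_eq r N) (divn_eq r' N) -!round_keyE.
by rewrite (_ : val (round_key r) = round_key r') // rq.
Qed.

Lemma key_msg_neq_mask i r : key_msg i != mask_msg r.
Proof.
apply/eqP => /edge_inj e; have i_lt := pair_lt i.
have [kn pn pk] := round_edge_facts r.
have i_ne : (2 * i != (2 * i).+1)%N by rewrite neq_ltn ltnSn.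
exact: pair_ends_neq_mask (e (ltnW i_lt) i_lt pn kn i_ne pk).
Qed.

Lemma lin_transmit_coef X :
  lin_transmit coef X = \row_r (X (key_msg (round_key r)) + X (mask_msg r)).
Proof.
apply/rowP => r; rewrite !mxE.
under eq_bigr do rewrite /coef mulrDl.
by rewrite big_split /= !sum_indicator_mul.
Qed.

Lemma coef_linear : is_linear_protocol (@Kn_holds n) sender coef.
Proof.
move=> r e; have [kn pn p_in _] := round_facts r; have [_ _ pk] := round_edge_facts r.
have i_lt := pair_lt (round_key r).
rewrite /coef /sender; case: (eqVneq e (key_msg (round_key r))) => [-> _ | _].
  by rewrite Kn_holds_edge ?(ltnW i_lt) ?neq_ltn ?ltnSn // val_client.
case: (eqVneq e (mask_msg r)) => [-> _ | _]; last by rewrite !add0r eqxx.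
by rewrite Kn_holds_edge // val_client // eqxx.
Qed.

Section Decode.
Variables (i : 'I_tau) (j : 'I_n).
Hypothesis j_out : ~~ in_pair i j.

Lemma other_rank_lt : (other_rank i j < N)%N.
Proof.
have := ltn_ord j; have := pair_lt i; move: j_out; rewrite /in_pair /other_rank.
by case/norP => /eqP ? /eqP ?; case: ifP => ?; lia.
Qed.

Lemma round_of_subproof : (i * N + other_rank i j < t)%N.
Proof.
have h : (i * N + other_rank i j < i.+1 * N)%N.
  by rewrite mulSnr ltn_add2l other_rank_lt.
by apply: leq_trans h _; rewrite leq_mul2r ltn_ord orbT.
Qed.

Definition round_of : 'I_t := Ordinal round_of_subproof.

Lemma round_key_of : round_key round_of = i.
Proof.
apply: val_inj; rewrite round_keyE /= divnMDl ?(others_gt0 round_of) //.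
by rewrite divn_small ?other_rank_lt ?addn0.
Qed.

Lemma mask_msg_of : mask_msg round_of = edge (pair_partner i j) j.
Proof.
have k_of : round_client round_of = j.
  rewrite /round_client round_key_of /= modnMDl modn_small ?other_rank_lt //.
  have := pair_lt i; move: j_out; rewrite /in_pair /other_client /other_rank.
  by case/norP => /eqP ? /eqP ?; case: (ltnP j (2 * i)) => ?; case: ifP => ?; lia.
by rewrite /mask_msg /round_partner k_of round_key_of.
Qed.

Lemma bcast_at_round_of (y : 'rV[F]_t) :
  bcast_at y (i * N + other_rank i j)%N = y 0 round_of.
Proof. exact: big_pred1. Qed.

End Decode.

Lemma decode_key j X : decode j X (lin_transmit coef X) = key X.
Proof.
apply/rowP => i; rewrite !mxE; case: ifPn => j_out //.
rewrite bcast_at_round_of // lin_transmit_coef mxE round_key_of //.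
by rewrite mask_msg_of // addrK.
Qed.

Lemma decode_local j (X Y : {ffun PM -> F}) y :
  (forall e, Kn_holds j e -> X e = Y e) -> decode j X y = decode j Y y.
Proof.
move=> XY; apply/rowP => i; rewrite !mxE; have i_lt := pair_lt i.
case: ifPn => j_in.
  by rewrite XY // Kn_holds_edge ?(ltnW i_lt) ?neq_ltn ?ltnSn.
have p_in := pair_partner_in_pair i j.
have pn : (pair_partner i j < n)%N.
  by case/orP: p_in => /eqP ->; rewrite ?(ltnW i_lt).
have pj : pair_partner i j != j by apply: contraNneq j_in => <-.
by rewrite XY // Kn_holds_edge // eqxx orbT.
Qed.

Lemma key_bcast_onto (k : 'rV[F]_tau) (y : 'rV[F]_t) :
  exists X, key X = k /\ lin_transmit coef X = y.
Proof.
pose X := \sum_i delta_ffun (k 0 i) (key_msg i) +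
          \sum_r delta_ffun (y 0 r - k 0 (round_key r)) (mask_msg r).
have Xk i : X (key_msg i) = k 0 i.
  rewrite ffunE (sum_delta_ffun_in _ _ key_msg_inj) sum_delta_ffun_out ?addr0 //.
  by move=> r; rewrite eq_sym key_msg_neq_mask.
have Xm r : X (mask_msg r) = y 0 r - k 0 (round_key r).
  rewrite ffunE (sum_delta_ffun_in _ _ mask_msg_inj) sum_delta_ffun_out ?add0r //.
  by move=> i; apply: key_msg_neq_mask.
exists X; split; first by apply/rowP => i; rewrite mxE Xk.
by apply/rowP => r; rewrite lin_transmit_coef mxE Xk Xm addrC subrK.
Qed.

Lemma lin_keys_achievable : lin_keys_with F (@Kn_holds n) tau t.
Proof.
have keyD : {morph key : X Y / X + Y}.
  by move=> X Y; apply/rowP => i; rewrite !mxE ffunE.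
exists sender, coef; split; first exact: coef_linear.
exists decode, key; split; first exact: decode_local.
split; first exact: decode_key.
split=> [kap | kap y].
  exact: key_uniform keyD (lin_transmitD coef) key_bcast_onto kap.
exact: key_bcast_indep keyD (lin_transmitD coef) key_bcast_onto kap y.
Qed.

End Construction.

Theorem mainTheorem13 (F : finFieldType) (n : nat) (tau : nat) :
  (2 <= n)%N -> (n < #|F|)%N ->
  (1 <= tau)%N -> (tau <= n./2)%N ->
  SL_eq F (@Kn_holds n) tau (tau * (n - 2)).
Proof.
move=> n_gt1 nF tau_gt0 tau_half; split; first exact: lin_keys_achievable.
move=> t keys; rewrite mulnC.
exact: lin_keys_lower_bound (@Kn_held_by_two n) (ltnW nF) keys.
Qed.
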